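(* Let $M\ge1$ and consider a memoryless channel with binary input $\{0,1\}$, output alphabet $\mathcal{Y}=\{-M,\dots,M\}$ and transition probabilities $\varepsilon_{y|x}$ satisfying $\varepsilon_{y|1}=\varepsilon_{-y|0}$ for all $y$. Let $\mathcal{C}\subseteq\{0,1\}^n$ be a binary linear code with minimum distance $d_{\min}$ and weight distribution $S_w$, used with maximum-likelihood decoding. Let $\mathbf{m}=(m_{-M+1},\dots,m_M)\in\mathbb{Z}_+^{2M}$. Then the decoding error probability satisfies $$P_e\le\sum_{\boldsymbol{\ell}\in\tilde{\mathcal{U}}_n(\mathbf{m})}\Big(\prod_{j=-M}^M\varepsilon_{j|0}^{\ell_j}\Big)\min\Bigg\{\sum_{w=d_{\min}}^n S_w\sum_{\substack{\boldsymbol{\mu}\in\mathcal{U}_w(\boldsymbol{\ell})\\ \sum_j\mu_j\mathrm{LLR}_j\le0}}\binom{w}{\mu_{-M},\dots,\mu_M}\binom{n-w}{\ell_{-M}-\mu_{-M},\dots,\ell_M-\mu_M},\ \binom{n}{\ell_{-M},\dots,\ell_M}\Bigg\}+\sum_{\substack{\boldsymbol{\ell}\in\mathbb{Z}_+^{2M+1},\ \sum_j\ell_j=n\\ \boldsymbol{\ell}\notin\tilde{\mathcal{U}}_n(\mathbf{m})}}\Big(\prod_{j=-M}^M\varepsilon_{j|0}^{\ell_j}\Big)\binom{n}{\ell_{-M},\dots,\ell_M}.$$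
   Context: $\mathbb{Z}_+$ denotes the nonnegative integers; $S_w$ is the number of codewords of Hamming weight $w$; $\binom{m}{a_1,\dots,a_k}=m!/(a_1!\cdots a_k!)$. $\tilde{\mathcal{U}}_n(\mathbf{m})=\{\boldsymbol{\ell}=(\ell_{-M},\dots,\ell_M)\in\mathbb{Z}_+^{2M+1}:\ \sum_j\ell_j=n,\ \ell_j\le m_j\ \text{for } j=-M+1,\dots,M\}$ (no constraint on $\ell_{-M}$). For $\boldsymbol{\ell}$ with $\sum_j\ell_j=n$, $\mathcal{U}_w(\boldsymbol{\ell})=\{\boldsymbol{\mu}\in\mathbb{Z}_+^{2M+1}:\ \sum_j\mu_j=w,\ \mu_j\le\ell_j\ \forall j\}$. $\mathrm{LLR}_j=\log(\varepsilon_{j|0}/\varepsilon_{j|1})$, and $\sum_j\mu_j\mathrm{LLR}_j\le0$ means $\prod_j(\varepsilon_{j|0}/\varepsilon_{j|1})^{\mu_j}\le1$. The error probability is the probability that the decoder does not output the transmitted codeword, with likelihood ties counted as errors; by linearity and symmetry it does not depend on the transmitted codeword. *)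

From mathcomp Require Import all_boot all_order all_algebra.
Set Implicit Arguments. Unset Strict Implicit. Unset Printing Implicit Defensive.
Import Order.TTheory GRing.Theory Num.Theory.

(* Output alphabet {-M,...,M}: ordinal i : 'I_(2M+1) encodes the symbol i - M. *)
Notation outY M := ('I_(2 * M).+1).

Definition sym (M : nat) (i : outY M) : int := (i : nat)%:Z - (M : nat)%:Z.

Definition wt (n : nat) (c : 'rV['F_2]_n) : nat := #|[set i : 'I_n | c ord0 i != 0%R]|.

Definition S (n : nat) (C : {vspace 'rV['F_2]_n}) (w : nat) : nat :=
  #|[set c : 'rV['F_2]_n | (c \in C) && (wt c == w)]|.

(* Minimum distance = minimum weight of a nonzero codeword
   (convention: n+1 for the trivial code {0}; then the sum over w is empty). *)
Definition dmin (n : nat) (C : {vspace 'rV['F_2]_n}) : nat :=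
  \big[minn/n.+1]_(c : 'rV['F_2]_n | (c \in C) && (c != 0%R)) wt c.

Definition multinom (T : finType) (m : nat) (a : T -> nat) : nat :=
  m`! %/ \prod_(t : T) (a t)`!.

Local Open Scope ring_scope.

Definition lik (R : realFieldType) (M n : nat) (eps : bool -> outY M -> R)
  (c : 'rV['F_2]_n) (y : {ffun 'I_n -> outY M}) : R :=
  \prod_(i < n) eps (c ord0 i != 0) (y i).

(* ML decoding error probability when c is transmitted, ties counted as errors:
   the decoder errs iff some other codeword c' has P(y|c') >= P(y|c). *)
Definition Perr (R : realFieldType) (M n : nat) (eps : bool -> outY M -> R)
  (C : {vspace 'rV['F_2]_n}) (c : 'rV['F_2]_n) : R :=
  \sum_(y : {ffun 'I_n -> outY M} |
        [exists c' : 'rV['F_2]_n, [&& c' \in C, c' != c & lik eps c y <= lik eps c' y]])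
    lik eps c y.

Definition ptype (R : realFieldType) (M : nat) (eps : bool -> outY M -> R)
  (l : outY M -> nat) : R := \prod_(j : outY M) eps false j ^+ l j.

(* sum_j mu_j LLR_j <= 0, written as prod_j (eps_{j|0}/eps_{j|1})^{mu_j} <= 1. *)
Definition llr_nonpos (R : realFieldType) (M : nat) (eps : bool -> outY M -> R)
  (mu : outY M -> nat) : bool :=
  \prod_(j : outY M) (eps false j / eps true j) ^+ mu j <= 1.

(* l in U~_n(m): sum l = n and l_j <= m_j for j = -M+1..M (ordinals 1..2M). *)
Definition inUt (M n : nat) (m : 'I_(2 * M) -> nat) (l : {ffun outY M -> 'I_n.+1}) : bool :=
  ((\sum_(j : outY M) (l j : nat))%N == n) &&
  [forall i : 'I_(2 * M), (l (lift ord0 i) : nat) <= m i]%N.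

Definition ubterm (R : realFieldType) (M n : nat) (eps : bool -> outY M -> R)
  (C : {vspace 'rV['F_2]_n}) (l : {ffun outY M -> 'I_n.+1}) : R :=
  \sum_(dmin C <= w < n.+1)
    (S C w)%:R *
    \sum_(mu : {ffun outY M -> 'I_n.+1} |
          [&& ((\sum_(j : outY M) (mu j : nat))%N == w),
              [forall j, (mu j : nat) <= l j]%N &
              llr_nonpos eps (fun j => (mu j : nat))])
      ((multinom w (fun j => (mu j : nat))) *
       (multinom (n - w) (fun j => (l j : nat) - mu j)))%N%:R.

Definition bound (R : realFieldType) (M n : nat) (eps : bool -> outY M -> R)
  (C : {vspace 'rV['F_2]_n}) (m : 'I_(2 * M) -> nat) : R :=
  \sum_(l : {ffun outY M -> 'I_n.+1} | inUt m l)
     ptype eps (fun j => (l j : nat)) *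
     Num.min (ubterm eps C l) (multinom n (fun j => (l j : nat)))%:R
  + \sum_(l : {ffun outY M -> 'I_n.+1} |
          ((\sum_(j : outY M) (l j : nat))%N == n) && ~~ inUt m l)
     ptype eps (fun j => (l j : nat)) * (multinom n (fun j => (l j : nat)))%:R.

From mathcomp Require Import all_boot all_order all_algebra zify.
Set Implicit Arguments. Unset Strict Implicit. Unset Printing Implicit Defensive.
Import Order.TTheory GRing.Theory Num.Theory.

(* Flipping every output symbol y into -y on the support of the transmitted codeword c turns
   P(.|c') into P(.|c' - c), by the symmetry of the channel; since c' |-> c' - c permutes the
   linear code, the error probability is that of the all-zero codeword.  Group the output words
   by their type l (the number of occurrences of each symbol): P(y|0) only depends on l, so it
   remains to count the erroneous words of each type.  There are at most as many of them as
   words of type l, a multinomial coefficient.  By the union bound they are also at most the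
   words y with 0 < P(y|0) <= P(y|c') for some nonzero codeword c'; the type mu of such a y on
   the support of c' has nonpositive LLR, and y is determined by its restrictions to that
   support and to its complement, whence at most multinom(w, mu) * multinom(n - w, l - mu)
   words for each mu, where w = wt c'.  Grouping the codewords by weight produces S_w. *)

Section Occurrences.
Variables (I T : finType).
Implicit Types (A W : {set I}) (y : {ffun I -> T}) (a : T -> nat).

Definition occ A y (j : T) : nat := \sum_(i in A) (y i == j).

Lemma sum_occ A y : \sum_j occ A y j = #|A|.
Proof.
rewrite exchange_big /= -sum1_card; apply: eq_bigr => i _.
by rewrite (bigD1 (y i)) //= eqxx big1 // => j; rewrite eq_sym => /negPf ->.
Qed.

Lemma occD1 A y x j : x \in A -> occ A y j = occ (A :\ x) y j + (y x == j).
Proof.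
move=> xA; rewrite /occ (bigD1 x) //= addnC; congr (_ + _).
by apply: eq_bigl => i; rewrite !inE andbC.
Qed.

Lemma occT_split W y j : occ setT y j = occ W y j + occ (~: W) y j.
Proof. by rewrite /occ (bigID [in W]) /=; congr (_ + _); apply: eq_bigl => i; rewrite !inE. Qed.

Lemma occ_le_card A y j : occ A y j <= #|I|.
Proof. by rewrite (leq_trans _ (max_card A)) // -sum1_card leq_sum // => i _; apply: leq_b1. Qed.

Lemma prod_occ (R : comPzSemiRingType) A y (F : T -> R) :
  (\prod_(i in A) F (y i) = \prod_j F j ^+ occ A y j)%R.
Proof.
rewrite (partition_big y predT) //=; apply: eq_bigr => j _.
rewrite /occ -big_mkcondr sum1dep_card -prodr_const.
by apply: eq_big => [i | i /andP [_ /eqP ->]]; rewrite ?inE.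
Qed.

Lemma card_bigcup_le (J : finType) (P : pred J) (F : J -> {set T}) :
  #|\bigcup_(j | P j) F j| <= \sum_(j | P j) #|F j|.
Proof.
apply: (big_ind2 (fun (B : {set T}) s => #|B| <= s)) => [|B s B' s' Bs B's'|//].
  by rewrite cards0.
by rewrite (leq_trans (leq_card_setU B B')) ?leq_add.
Qed.

Variable t0 : T.

(* A word indexed by A is represented by a word on I that equals [t0] off A. *)
Definition words_of_type A a : {set {ffun I -> T}} :=
  [set y | [forall j, occ A y j == a j] && [forall i, (i \notin A) ==> (y i == t0)]].

Lemma words_of_typeP A a y :
  reflect ((forall j, occ A y j = a j) /\ (forall i, i \notin A -> y i = t0))
          (y \in words_of_type A a).
Proof.
rewrite inE; apply: (iffP andP) => [[/forallP o /forallP e] | [o e]].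
  split; first by move=> j; apply/eqP.
  by move=> i /(implyP (e i)) /eqP.
by split; apply/forallP => z; [rewrite o | apply/implyP => /e ->].
Qed.

Lemma sum_type_card A a y : y \in words_of_type A a -> \sum_j a j = #|A|.
Proof. by case/words_of_typeP => o _; rewrite -(sum_occ A y); apply: eq_bigr => j _; rewrite o. Qed.

Lemma card_words_of_type_set0 a : #|words_of_type set0 a| * \prod_j (a j)`! <= 1.
Proof.
have [-> | /set0Pn [y Sy]] := eqVneq (words_of_type set0 a) set0; first by rewrite cards0.
have a0 j : a j = 0.
  by have := sum_type_card Sy; rewrite cards0 => /eqP; rewrite sum_nat_eq0 => /forallP /(_ j) /eqP.
rewrite big1 => [|j _]; last by rewrite a0.
rewrite muln1 -(cards1 ([ffun=> t0] : {ffun I -> T})).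
apply/subset_leq_card/subsetP => z /words_of_typeP [_ e].
by rewrite inE; apply/eqP/ffunP => i; rewrite ffunE e ?inE.
Qed.

Lemma card_words_of_type_fiber A a x j : x \in A ->
  #|[set y in words_of_type A a | y x == j]|
    <= #|words_of_type (A :\ x) (fun t => a t - (t == j))|.
Proof.
move=> xA; pose f y : {ffun I -> T} := [ffun i => if i == x then t0 else y i].
have f_inj : {in [set y in words_of_type A a | y x == j] &, injective f}.
  move=> y1 y2; rewrite !inE => /andP [_ /eqP y1x] /andP [_ /eqP y2x] /ffunP f12.
  apply/ffunP => i; have := f12 i; rewrite !ffunE.
  by case: eqP => [-> _ | //]; rewrite y1x y2x.
rewrite -(card_in_imset f_inj).
apply/subset_leq_card/subsetP => z /imsetP [y].
rewrite inE => /andP [/words_of_typeP [o e] /eqP yx] ->.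
apply/words_of_typeP; split=> [t | i]; last first.
  by rewrite !inE negb_and negbK ffunE; case: eqP => //= _ /e.
rewrite -o (occD1 _ _ xA) yx [j == t]eq_sym addnK; apply: eq_bigr => i.
by rewrite !inE ffunE => /andP [/negPf -> _].
Qed.

Lemma prod_fact_dec (a : T -> nat) j : 0 < a j ->
  \prod_t (a t)`! = a j * \prod_t (a t - (t == j))`!.
Proof.
move=> aj; rewrite (bigD1 j) //= [in RHS](bigD1 j) //= eqxx mulnA; congr (_ * _).
  by case: (a j) aj => // k _; rewrite factS subn1.
by apply: eq_bigr => t /negPf ->; rewrite subn0.
Qed.

Lemma card_words_of_type_fact A a : #|words_of_type A a| * \prod_j (a j)`! <= #|A|`!.
Proof.
move hA: #|A| => k; elim: k A a hA => [|k IH] A a hA.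
  by move/eqP: hA; rewrite cards_eq0 => /eqP ->; exact: card_words_of_type_set0.
have [-> | /set0Pn [y0 Sy0]] := eqVneq (words_of_type A a) set0; first by rewrite cards0.
have [x xA] : exists x, x \in A by apply/set0Pn; rewrite -card_gt0 hA.
set S := words_of_type A a.
have -> : #|S| = \sum_j #|[set y in S | y x == j]|.
  by rewrite -sum1_card (partition_big (fun y : {ffun I -> T} => y x) predT) //=;
    apply: eq_bigr => j _; rewrite sum1dep_card; apply: eq_card => y; rewrite !inE.
rewrite big_distrl factS -hA -(sum_type_card Sy0) big_distrl /=; apply: leq_sum => j _.
have [aj0 | ajp] := posnP (a j).
  rewrite aj0 mul0n leqn0 muln_eq0 cards_eq0; apply/orP; left; apply/eqP/setP => y.
  rewrite in_set0 inE; apply/negbTE/negP => /andP [/words_of_typeP [o _] /eqP yx].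
  by have := o j; rewrite (occD1 _ _ xA) yx eqxx aj0 addn1.
rewrite (prod_fact_dec ajp) mulnCA leq_mul2l; apply/orP; right.
apply: leq_trans (IH (A :\ x) (fun t => a t - (t == j)) _).
  by rewrite leq_mul2r card_words_of_type_fiber ?orbT.
by move: hA; rewrite (cardsD1 x) xA => -[].
Qed.

Lemma card_words_of_type A a : #|words_of_type A a| <= multinom #|A| a.
Proof.
by rewrite /multinom leq_divRL ?card_words_of_type_fact // prodn_gt0 // => j; apply: fact_gt0.
Qed.

Lemma card_split_type W (l mu : T -> nat) (D : {set {ffun I -> T}}) :
  (forall y, y \in D -> forall j, occ setT y j = l j /\ occ W y j = mu j) ->
  #|D| <= #|words_of_type W mu| * #|words_of_type (~: W) (fun j => l j - mu j)|.
Proof.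
move=> Dtype; pose restr (B : {set I}) y : {ffun I -> T} :=
  [ffun i => if i \in B then y i else t0].
have restr_inj : injective (fun y => (restr W y, restr (~: W) y)).
  move=> y1 y2 [/ffunP r1 /ffunP r2]; apply/ffunP => i.
  by have := r1 i; have := r2 i; rewrite !ffunE inE; case: (i \in W).
have restr_type B y j : occ B (restr B y) j = occ B y j.
  by apply: eq_bigr => i iB; rewrite ffunE iB.
have restr_out (B : {set I}) y i : i \notin B -> restr B y i = t0 by rewrite ffunE => /negPf ->.
rewrite -cardsX -(card_imset _ restr_inj); apply/subset_leq_card/subsetP => z /imsetP [y yD ->].
have ly j : occ setT y j = l j by case: (Dtype y yD j).
have muy j : occ W y j = mu j by case: (Dtype y yD j).
rewrite inE; apply/andP; split; apply/words_of_typeP; split=> [j|]; try exact: restr_out.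
  by rewrite restr_type.
by rewrite restr_type -ly -muy (occT_split W) addKn.
Qed.

End Occurrences.

Local Open Scope ring_scope.

Lemma F2_subr_neq0 (a b : 'F_2) : b != 0 -> (a - b != 0) = (a == 0).
Proof. by case: a => -[|[|//]] ?; case: b => -[|[|//]] ?; rewrite // -val_eqE. Qed.

Section CodeWeights.
Variables (n : nat) (C : {vspace 'rV['F_2]_n}).

Lemma wt_le (c : 'rV['F_2]_n) : (wt c <= n)%N.
Proof. by rewrite /wt (leq_trans (max_card _)) ?card_ord. Qed.

Lemma dmin_le_wt c : c \in C -> c != 0 -> (dmin C <= wt c)%N.
Proof.
move=> cC c0; rewrite /dmin; elim: (index_enum _) (mem_index_enum c) => [//|x r IH].
rewrite inE big_cons => /predU1P [<- | cr]; first by rewrite cC c0 geq_minl.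
by case: ifP => _; rewrite ?geq_min IH ?orbT.
Qed.

Lemma sum_codewords_by_weight (G : nat -> nat) :
  (\sum_(c | (c \in C) && (c != 0%R)) G (wt c) <= \sum_(dmin C <= w < n.+1) S C w * G w)%N.
Proof.
rewrite (eq_bigr (fun c => \sum_(dmin C <= w < n.+1 | w == wt c) G w)%N); last first.
  by move=> c /andP [cC c0]; rewrite big_nat1_eq dmin_le_wt //= ltnS wt_le.
rewrite (exchange_big_dep xpredT) //=; apply: leq_sum => w _.
rewrite (eq_bigr (fun=> G w)) => [|c /andP [_ /eqP ->] //].
rewrite sum_nat_const leq_mul2r /S; apply/orP; right.
apply/subset_leq_card/subsetP => c; rewrite inE unfold_in /=.
by move=> /andP [/andP [-> _] /eqP ->]; rewrite eqxx.
Qed.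

End CodeWeights.

Lemma sym_rev_ord (M : nat) (y : outY M) : sym (rev_ord y) = - sym y.
Proof. by rewrite /sym /=; have := ltn_ord y; rewrite ltnS subSS => ?; lia. Qed.

Definition supp (n : nat) (c : 'rV['F_2]_n) : {set 'I_n} := [set i | c ord0 i != 0].

Lemma card_supp (n : nat) (c : 'rV['F_2]_n) : #|supp c| = wt c.
Proof. by []. Qed.

Section Channel.
Variables (R : realFieldType) (M n : nat) (eps : bool -> outY M -> R).
Hypothesis eps_ge0 : forall x y, 0 <= eps x y.
Hypothesis eps_sym : forall y y' : outY M, sym y' = - sym y -> eps true y = eps false y'.

Lemma eps_rev_ord b y : eps b y = eps (~~ b) (rev_ord y).
Proof.
case: b; first by apply: eps_sym; rewrite sym_rev_ord.
by rewrite (@eps_sym (rev_ord y) y) // sym_rev_ord opprK.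
Qed.

Definition flip_on (c : 'rV['F_2]_n) (y : {ffun 'I_n -> outY M}) : {ffun 'I_n -> outY M} :=
  [ffun i => if c ord0 i != 0 then rev_ord (y i) else y i].

Lemma flip_onK c : involutive (flip_on c).
Proof. by move=> y; apply/ffunP => i; rewrite !ffunE; case: (c ord0 i != 0); rewrite ?rev_ordK. Qed.

Lemma lik_flip_on c c' y : lik eps c' y = lik eps (c' - c) (flip_on c y).
Proof.
apply: eq_bigr => i _; rewrite ffunE !mxE.
have [-> | ci] := eqVneq (c ord0 i) 0; first by rewrite subr0.
by rewrite F2_subr_neq0 // [LHS]eps_rev_ord negbK.
Qed.

Lemma Perr_translate (C : {vspace 'rV['F_2]_n}) c : c \in C -> Perr eps C c = Perr eps C 0.
Proof.
move=> cC; rewrite /Perr (reindex_inj (can_inj (flip_onK c))) /=.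
have lik_c y : lik eps c (flip_on c y) = lik eps 0 y by rewrite (lik_flip_on c) subrr flip_onK.
apply: eq_big => y; last by rewrite lik_c.
rewrite lik_c; apply/existsP/existsP => -[c' /and3P [c'C c'c le]].
  exists (c' - c); rewrite memvB // subr_eq0 c'c /=.
  by rewrite [lik _ c' _](lik_flip_on c) flip_onK in le.
exists (c' + c); rewrite memvD // -subr_eq0 addrK c'c /=.
by rewrite [lik _ (c' + c) _](lik_flip_on c) flip_onK addrK.
Qed.

Definition type_of (A : {set 'I_n}) (z : {ffun 'I_n -> outY M}) : {ffun outY M -> 'I_n.+1} :=
  [ffun j => inord (occ A z j)].

Lemma type_ofE A z j : type_of A z j = occ A z j :> nat.
Proof. by rewrite ffunE inordK // ltnS (leq_trans (occ_le_card _ _ _)) ?card_ord. Qed.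

Lemma lik0_ptype z : lik eps 0 z = ptype eps (fun j => type_of setT z j : nat).
Proof.
rewrite /lik (eq_bigr (fun i => eps false (z i))) => [|i _]; last by rewrite mxE eqxx.
rewrite (eq_bigl [in setT]) => [|i]; last by rewrite inE.
by rewrite prod_occ; apply: eq_bigr => j _; rewrite type_ofE.
Qed.

Lemma llr_nonpos_type_on_supp c' z :
  lik eps 0 z != 0 -> lik eps 0 z <= lik eps c' z ->
  llr_nonpos eps (fun j => type_of (supp c') z j : nat).
Proof.
set W := supp c'; set P0 := \prod_(i in W) eps false (z i).
set P1 := \prod_(i in W) eps true (z i); set Q := \prod_(i in ~: W) eps false (z i).
have lik_split c : lik eps c z =
    \prod_(i in W) eps (c ord0 i != 0) (z i) * \prod_(i in ~: W) eps (c ord0 i != 0) (z i).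
  by rewrite /lik (bigID [in W]) /=; congr (_ * _); apply: eq_bigl => i; rewrite !inE.
have -> : lik eps 0 z = P0 * Q.
  by rewrite lik_split; congr (_ * _); apply: eq_bigr => i _; rewrite mxE eqxx.
have -> : lik eps c' z = P1 * Q.
  rewrite lik_split; congr (_ * _); apply: eq_bigr => i; rewrite !inE; first by move=> ->.
  by move/negbTE ->.
rewrite /llr_nonpos.
have -> : \prod_j (eps false j / eps true j) ^+ (type_of W z j : nat) = P0 / P1.
  rewrite /P0 /P1 -prodf_div (prod_occ _ _ (fun j => eps false j / eps true j)).
  by apply: eq_bigr => j _; rewrite type_ofE.
have eps_prod_ge0 (A : {set 'I_n}) b : 0 <= \prod_(i in A) eps b (z i).
  by apply: prodr_ge0 => i _; apply: eps_ge0.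
move=> PQ_neq0 PQ_le.
have PQ_gt0 : 0 < P0 * Q by rewrite lt_def PQ_neq0 mulr_ge0 ?eps_prod_ge0.
have Q_gt0 : 0 < Q.
  by rewrite lt_def eps_prod_ge0 andbT; apply: contraTneq PQ_gt0 => ->; rewrite mulr0 ltxx.
have P0_le_P1 : P0 <= P1 by rewrite -(ler_pM2r Q_gt0).
have P1_gt0 : 0 < P1.
  apply: lt_le_trans P0_le_P1; rewrite lt_def eps_prod_ge0 andbT.
  by apply: contraTneq PQ_gt0 => ->; rewrite mul0r ltxx.
by rewrite ler_pdivrMr // mul1r.
Qed.

Definition llr_subtype (l : {ffun outY M -> 'I_n.+1}) (w : nat)
    (mu : {ffun outY M -> 'I_n.+1}) : bool :=
  [&& (\sum_(j : outY M) (mu j : nat) == w)%N, [forall j, (mu j : nat) <= l j]%N &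
      llr_nonpos eps (fun j => (mu j : nat))].

Definition pairwise_error_count (l : {ffun outY M -> 'I_n.+1}) (w : nat) : nat :=
  \sum_(mu | llr_subtype l w mu)
      ((multinom w (fun j => (mu j : nat))) *
       (multinom (n - w) (fun j => (l j : nat) - mu j)))%N.

Lemma card_pairwise_error (c' : 'rV['F_2]_n) l :
  (#|[set z | [&& type_of setT z == l, lik eps 0 z != 0 & lik eps 0 z <= lik eps c' z]%R]|
    <= pairwise_error_count l (wt c'))%N.
Proof.
set W := supp c'; rewrite -sum1dep_card.
rewrite (partition_big (type_of W) (llr_subtype l (wt c'))) => [|z]; last first.
  case/and3P => /eqP <- z_nz z_le; rewrite /llr_subtype llr_nonpos_type_on_supp // andbT.
  apply/andP; split; last by apply/forallP => j; rewrite !type_ofE (occT_split W) leq_addr.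
  by rewrite -card_supp -(sum_occ W z); apply/eqP/eq_bigr => j _; rewrite type_ofE.
apply: leq_sum => mu _; rewrite sum1dep_card.
apply: leq_trans (card_split_type ord0 (l := fun j => l j) (mu := fun j => mu j) _) _.
  by move=> z; rewrite !inE => /andP [/and3P [/eqP <- _ _] /eqP <-] j; rewrite !type_ofE.
have -> : (n - wt c' = #|~: W|)%N by rewrite cardsCs setCK card_ord card_supp.
by apply: leq_mul; rewrite -?card_supp card_words_of_type.
Qed.

Definition error_words (C : {vspace 'rV['F_2]_n}) (l : {ffun outY M -> 'I_n.+1}) :
    {set {ffun 'I_n -> outY M}} :=
  [set z | [&& type_of setT z == l, lik eps 0 z != 0 &
              [exists c', [&& c' \in C, c' != 0 & lik eps 0 z <= lik eps c' z]]]].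

Lemma card_error_words_le_ubterm C l : #|error_words C l|%:R <= ubterm eps C l.
Proof.
have -> : ubterm eps C l = (\sum_(dmin C <= w < n.+1) S C w * pairwise_error_count l w)%N%:R.
  by rewrite natr_sum; apply: eq_bigr => w _; rewrite natrM natr_sum.
rewrite ler_nat (leq_trans _ (sum_codewords_by_weight _ _)) //.
pose K c' := [set z | [&& type_of setT z == l, lik eps 0 z != 0 & lik eps 0 z <= lik eps c' z]].
apply: (@leq_trans (\sum_(c' in C | c' != 0) #|K c'|)); last first.
  by apply: leq_sum => c' _; apply: card_pairwise_error.
apply: leq_trans (card_bigcup_le _ K); apply/subset_leq_card/subsetP => z.
rewrite inE => /and3P [zl z_nz /existsP [c' /and3P [c'C c'0 le]]].
by apply/bigcupP; exists c'; rewrite ?c'C ?c'0 // inE zl z_nz le.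
Qed.

Lemma card_error_words_le_multinom C l :
  (#|error_words C l| <= multinom n (fun j => (l j : nat)))%N.
Proof.
have := card_words_of_type ord0 [set: 'I_n] (fun j => l j : nat).
rewrite cardsT card_ord; apply/leq_trans/subset_leq_card/subsetP => z.
rewrite inE => /and3P [/eqP <- _ _]; apply/words_of_typeP; split=> [j|i]; last by rewrite inE.
by rewrite type_ofE.
Qed.

Lemma Perr0_by_type C : Perr eps C 0 =
  \sum_(l : {ffun outY M -> 'I_n.+1} | (\sum_j (l j : nat))%N == n)
     ptype eps (fun j => l j : nat) * #|error_words C l|%:R.
Proof.
rewrite /Perr (bigID (fun z => lik eps 0 z != 0)) /= [X in _ + X]big1 ?addr0; last first.
  by move=> z /andP [_ /negPn /eqP].
rewrite (partition_big (type_of setT) (fun l : {ffun outY M -> 'I_n.+1} =>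
  (\sum_j (l j : nat))%N == n)) /= => [|z _]; last first.
  by rewrite (eq_bigr _ (fun j _ => type_ofE _ _ j)) sum_occ cardsT card_ord.
apply: eq_bigr => l _; rewrite mulr_natr -sumr_const.
apply: eq_big => [z | z /andP [_ /eqP <-]]; last exact: lik0_ptype.
by rewrite inE andbC [_ && (_ != 0)]andbC.
Qed.

Lemma Perr0_le_bound (C : {vspace 'rV['F_2]_n}) m : Perr eps C 0 <= bound eps C m.
Proof.
have ptype_ge0 (l : outY M -> nat) : 0 <= ptype eps l.
  by apply: prodr_ge0 => j _; rewrite exprn_ge0.
rewrite Perr0_by_type (bigID (inUt m)) /=; apply: lerD.
  rewrite (eq_bigl (inUt m)) => [|l]; last by rewrite /inUt; case: (_ == n).
  apply: ler_sum => l _; rewrite ler_wpM2l // le_min card_error_words_le_ubterm.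
  by rewrite ler_nat card_error_words_le_multinom.
apply: ler_sum => l _; rewrite ler_wpM2l // ler_nat.
exact: card_error_words_le_multinom.
Qed.

End Channel.

Theorem corollary1 (R : realFieldType) (M n : nat) (hM : (1 <= M)%N)
  (eps : bool -> outY M -> R)
  (eps_ge0 : forall x y, 0 <= eps x y)
  (eps_sum1 : forall x, \sum_(y : outY M) eps x y = 1)
  (eps_sym : forall y y' : outY M, sym y' = - sym y -> eps true y = eps false y')
  (C : {vspace 'rV['F_2]_n})
  (m : 'I_(2 * M) -> nat)
  (c : 'rV['F_2]_n) (hc : c \in C) :
  Perr eps C c <= bound eps C m.
Proof. by rewrite (Perr_translate eps_sym hc); apply: Perr0_le_bound. Qed.
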